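(* Let $B$ be a supersoluble brace, and let $C$ be a maximal subbrace of $B$ (a proper subbrace not properly contained in any proper subbrace). Then $|B:C|$ is a prime number. In particular, $(C,+)$ (resp. $(C,\cdot)$) is a maximal subgroup of $(B,+)$ (resp. $(B,\cdot)$) of prime index.
   Context: A brace (skew left brace) is a set $B$ with two binary operations $+$ and $\cdot$ such that $(B,+)$ and $(B,\cdot)$ are groups and $a(b+c)=ab-a+ac$ for all $a,b,c\in B$. A subbrace is a subset that is a subgroup of both groups. $\lambda_a(b)=-a+ab$ defines a homomorphism $\lambda\colon(B,\cdot)\to\operatorname{Aut}(B,+)$. An ideal is a subbrace normal in both groups and invariant under all $\lambda_b$; quotients by ideals are braces. $\operatorname{Soc}(B)=\operatorname{Ker}\lambda\cap Z(B,+)$. $B$ is supersoluble if there is a finite chain of ideals $\{0\}=I_0\le\dots\le I_n=B$ such that for each $i$, either $(I_{i+1}/I_i,+)$ is infinite cyclic and $I_{i+1}/I_i\le\operatorname{Soc}(B/I_i)$, or $I_{i+1}/I_i$ has prime order. For a subbrace $C$, if $|(B,+):(C,+)|$ and $|(B,\cdot):(C,\cdot)|$ are both finite and equal to $n$, the index $|B:C|$ is defined to be $n$. *)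

(* Braces may be infinite,
   so the two groups are given by explicit operations and axioms. *)
From mathcomp Require Import all_boot.
Set Implicit Arguments.
Unset Strict Implicit.
Unset Printing Implicit Defensive.

(* A skew left brace: (B,+) and (B,.) groups, a(b+c) = ab - a + ac. *)
Record brace := Brace {
  car :> Type;
  badd : car -> car -> car;  bzero : car;  bopp : car -> car;
  bmul : car -> car -> car;  bone : car;   binv : car -> car;
  baddA : forall a b c, badd a (badd b c) = badd (badd a b) c;
  badd0x : forall a, badd bzero a = a;
  baddx0 : forall a, badd a bzero = a;
  baddNx : forall a, badd (bopp a) a = bzero;
  baddxN : forall a, badd a (bopp a) = bzero;
  bmulA : forall a b c, bmul a (bmul b c) = bmul (bmul a b) c;
  bmul1x : forall a, bmul bone a = a;
  bmulx1 : forall a, bmul a bone = a;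
  bmulVx : forall a, bmul (binv a) a = bone;
  bmulxV : forall a, bmul a (binv a) = bone;
  brace_compat : forall a b c,
    bmul a (badd b c) = badd (badd (bmul a b) (bopp a)) (bmul a c)
}.

Section GroupNotions.
Variables (T : Type) (op : T -> T -> T) (e : T) (inv : T -> T).

Definition is_subgroup (H : T -> Prop) : Prop :=
  [/\ H e, (forall x y, H x -> H y -> H (op x y)) & (forall x, H x -> H (inv x))].

Definition is_normal (H : T -> Prop) : Prop :=
  forall g x, H x -> H (op (op g x) (inv g)).

(* |K : H| = n : there are n elements of K lying in pairwise distinct left
   cosets of H, and these cosets cover K. *)
Definition has_index (K H : T -> Prop) (n : nat) : Prop :=
  exists f : 'I_n -> T,
    [/\ (forall i, K (f i)),
        (forall i j, H (op (inv (f i)) (f j)) -> i = j) &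
        (forall x, K x -> exists i, H (op (inv (f i)) x))].

Definition maximal_subgroup (H : T -> Prop) : Prop :=
  [/\ is_subgroup H, (exists x, ~ H x) &
      (forall K, is_subgroup K -> (forall x, H x -> K x) ->
         (forall x, K x) \/ (forall x, K x -> H x))].

Definition natmul (g : T) (n : nat) : T := iter n (op g) e.
End GroupNotions.

Definition setT_ (T : Type) : T -> Prop := fun _ => True.

Section BraceNotions.
Variable B : brace.

Definition lambda (a b : B) : B := badd (bopp a) (bmul a b).

Definition subbrace (C : B -> Prop) : Prop :=
  is_subgroup (@badd B) (bzero B) (@bopp B) C /\
  is_subgroup (@bmul B) (bone B) (@binv B) C.

Definition ideal (I : B -> Prop) : Prop :=
  [/\ subbrace I, is_normal (@badd B) (@bopp B) I,
      is_normal (@bmul B) (@binv B) I &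
      (forall b x, I x -> I (lambda b x))].

Definition maximal_subbrace (C : B -> Prop) : Prop :=
  [/\ subbrace C, (exists x, ~ C x) &
      (forall D, subbrace D -> (forall x, C x -> D x) ->
         (forall x, D x) \/ (forall x, D x -> C x))].

(* For ideals J <= I: (I/J,+) is infinite cyclic. *)
Definition quot_inf_cyclic (I J : B -> Prop) : Prop :=
  exists g, I g /\
    (forall x, I x -> exists n,
        J (badd (bopp (natmul (@badd B) (bzero B) g n)) x) \/
        J (badd (bopp (bopp (natmul (@badd B) (bzero B) g n))) x)) /\
    (forall n, J (natmul (@badd B) (bzero B) g n) -> n = 0).

(* For ideals J <= I: I/J <= Soc(B/J) = Ker lambda cap Z(B/J,+). *)
Definition quot_in_socle (I J : B -> Prop) : Prop :=
  forall x, I x ->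
    (forall b, J (badd (bopp b) (lambda x b))) /\
    (forall y, J (badd (bopp (badd y x)) (badd x y))).

(* For ideals J <= I: I/J has prime order. *)
Definition quot_prime_order (I J : B -> Prop) : Prop :=
  exists p, prime p /\ has_index (@badd B) (@bopp B) I J p.

Definition supersoluble : Prop :=
  exists (n : nat) (I : nat -> B -> Prop),
    [/\ (forall x, I 0%N x <-> x = bzero B),
        (forall x, I n x),
        (forall i, (i <= n)%N -> ideal (I i)),
        (forall i, (i < n)%N -> forall x, I i x -> I i.+1 x) &
        (forall i, (i < n)%N ->
           (quot_inf_cyclic (I i.+1) (I i) /\ quot_in_socle (I i.+1) (I i))
           \/ quot_prime_order (I i.+1) (I i))].
End BraceNotions.

(* Let I = I_(k+1) be the first term of the supersoluble series not contained in C, and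
   J = I_k ⊆ C. The subbrace C + I properly contains C, hence B = C + I = C I and
   |B : C| = |I : I ∩ C| in both groups. If I/J has prime order, Lagrange gives I ∩ C = J.
   Otherwise I/J = <g J> is cyclic and lies in Soc(B/J); then I ∩ C = J + <m g> for
   some m, every J + <a g> is an ideal, and maximality of C forces m to be prime. In both
   cases, for a, b in I, a⁻¹b = λ_(a⁻¹)(-a + b) lies in C exactly when -a + b does, so
   I ∩ C has the same transversals in (I,+) and (I,·). A subgroup of prime index is
   maximal. *)

From mathcomp Require Import all_boot all_algebra.
From mathcomp Require Import boolp zify.
Import GRing.Theory Num.Theory.
Set Implicit Arguments.
Unset Strict Implicit.
Unset Printing Implicit Defensive.

Record group_laws (T : Type) (op : T -> T -> T) (e : T) (inv : T -> T) : Prop :=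
  GroupLaws {
    groupA : associative op;
    group1x : left_id e op;
    groupx1 : right_id e op;
    groupVx : forall a, op (inv a) a = e;
    groupxV : forall a, op a (inv a) = e }.

Section Group.
Variables (T : Type) (op : T -> T -> T) (e : T) (inv : T -> T).
Hypothesis laws : group_laws op e inv.
Let opA := groupA laws.
Let op1x := group1x laws.
Let opx1 := groupx1 laws.
Let opVx := groupVx laws.
Let opxV := groupxV laws.

Lemma opKg a b : op (inv a) (op a b) = b.
Proof. by rewrite opA opVx op1x. Qed.

Lemma opKVg a b : op a (op (inv a) b) = b.
Proof. by rewrite opA opxV op1x. Qed.

Lemma opgK a b : op (op b a) (inv a) = b.
Proof. by rewrite -opA opxV opx1. Qed.

Lemma opgKV a b : op (op b (inv a)) a = b.
Proof. by rewrite -opA opVx opx1. Qed.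

Lemma opgI a b c : op a b = op a c -> b = c.
Proof. by move=> h; rewrite -(opKg a b) h opKg. Qed.

Lemma invK a : inv (inv a) = a.
Proof. by apply: (@opgI (inv a)); rewrite opxV opVx. Qed.

Lemma invM a b : inv (op a b) = op (inv b) (inv a).
Proof. by apply: (@opgI (op a b)); rewrite opxV -opA opKVg opxV. Qed.

Lemma inv1 : inv e = e.
Proof. by rewrite -{2}(opVx e) opx1. Qed.

Lemma inv_uniq a b : op a b = e -> b = inv a.
Proof. by move=> h; apply: (@opgI a); rewrite h opxV. Qed.

Section Subgroup.
Variable H : T -> Prop.
Hypothesis sH : is_subgroup op e inv H.

Lemma subgroup1 : H e. Proof. by case: sH. Qed.

Lemma subgroupM x y : H x -> H y -> H (op x y).
Proof. by case: sH => _ hM _; apply: hM. Qed.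

Lemma subgroupV x : H x -> H (inv x).
Proof. by case: sH => _ _ hV; apply: hV. Qed.

Lemma subgroup_coset_trans a b c :
  H (op (inv a) b) -> H (op (inv a) c) -> H (op (inv b) c).
Proof. by move=> hb hc; have := subgroupM (subgroupV hb) hc; rewrite invM invK -opA opKVg. Qed.

Lemma subgroup_coset_eq a b x :
  H (op (inv a) x) -> H (op (inv b) x) -> H (op (inv a) b).
Proof. by move=> ha hb; have := subgroupM ha (subgroupV hb); rewrite invM invK -opA opKVg. Qed.

End Subgroup.

Definition is_transversal (G H : T -> Prop) n (f : 'I_n -> T) : Prop :=
  [/\ forall i, G (f i),
      forall i j, H (op (inv (f i)) (f j)) -> i = j &
      forall x, G x -> exists i, H (op (inv (f i)) x)].

Lemma transversal_card_dvd (G H K : T -> Prop) p (f : 'I_p -> T) :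
  is_subgroup op e inv G -> is_subgroup op e inv H -> is_subgroup op e inv K ->
  (forall x, H x -> K x) -> is_transversal G H f ->
  #|[set j | `[< K (f j) >]]| %| p.
Proof.
move=> sG sH sK HK [fG fD fC].
have [i0 _] := fC e (subgroup1 sG).
pose idx x := odflt i0 [pick i | `[< H (op (inv (f i)) x) >]].
have idxP x : G x -> H (op (inv (f (idx x))) x).
  move=> Gx; rewrite /idx; case: pickP => [i /asboolP // | none].
  by have [i /asboolP] := fC x Gx; rewrite none.
have idx_uniq x i : G x -> H (op (inv (f i)) x) -> idx x = i.
  by move=> Gx hi; apply: fD; exact: (subgroup_coset_eq sH (idxP x Gx) hi).
pose A := [set j | `[< K (f j) >]].
pose R i j := `[< K (op (inv (f i)) (f j)) >].
have R_equiv : {in [set: 'I_p] & &, equivalence_rel R}.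
  move=> i j k _ _ _; split; first by apply/asboolP; rewrite opVx; apply: subgroup1.
  move/asboolP => Kij; apply/asboolP/asboolP => Kik.
    by have := subgroupM sK (subgroupV sK Kij) Kik; rewrite invM invK -opA opKVg.
  by have := subgroupM sK Kij Kik; rewrite -opA opKVg.
pose phi i j := idx (op (f i) (f j)).
have phiG i j : G (op (f i) (f j)) := subgroupM sG (fG i) (fG j).
have phi_inj i : injective (phi i).
  move=> j j' phi_jj'; apply: fD.
  have Hj := idxP _ (phiG i j); rewrite -/(phi i j) phi_jj' in Hj.
  have := subgroup_coset_trans sH Hj (idxP _ (phiG i j')).
  by rewrite invM -opA opKg.
have classE i : [set j in [set: 'I_p] | R i j] = phi i @: A.
  apply/setP => k; rewrite !inE; apply/asboolP/imsetP => [Kik | [j]].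
    have Gy := subgroupM sG (subgroupV sG (fG i)) (fG k).
    exists (idx (op (inv (f i)) (f k))).
      rewrite inE; apply/asboolP.
      have := subgroupM sK Kik (subgroupV sK (HK _ (idxP _ Gy))).
      by rewrite invM invK opKVg.
    apply/esym/idx_uniq => //.
    by have := subgroupV sH (idxP _ Gy); rewrite !invM !invK opA.
  rewrite inE => /asboolP Kj ->.
  have := subgroupM sK Kj (subgroupV sK (HK _ (idxP _ (phiG i j)))).
  by rewrite invM invK invM !opA opxV op1x.
have /card_uniform_partition : {in equivalence_partition R [set: 'I_p],
    forall S : {set 'I_p}, #|S| = #|A|}.
  by move=> S /imsetP [i _ ->]; rewrite classE card_imset.
move=> /(_ _ (equivalence_partitionP R_equiv)); rewrite cardsT card_ord => p_eq.
by apply/dvdnP; eexists; exact: p_eq.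
Qed.

Lemma prime_index_intermediate (G H K : T -> Prop) p :
  is_subgroup op e inv G -> is_subgroup op e inv H -> is_subgroup op e inv K ->
  (forall x, H x -> K x) -> (forall x, K x -> G x) ->
  prime p -> has_index op inv G H p ->
  (forall x, K x -> H x) \/ (forall x, G x -> K x).
Proof.
move=> sG sH sK HK KG p_pr [f tf]; have [fG fD fC] := tf.
have Kf x i : K x -> H (op (inv (f i)) x) -> K (f i).
  by move=> Kx hi; have := subgroupM sK Kx (subgroupV sK (HK _ hi)); rewrite invM invK opKVg.
have := transversal_card_dvd sG sH sK HK tf.
case/primeP: p_pr => _ dvdp /dvdp /orP [/eqP A1 | /eqP Ap].
- left => x Kx; have [i0 H_i0] := fC e (subgroup1 sG).
  have [i Hi] := fC x (KG x Kx).
  have [j Aj] := cards1P (introT eqP A1).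
  have Ai k : K (f k) -> k = j by move=> Kk; apply/set1P; rewrite -Aj inE; apply/asboolP.
  have Hi0 : H (f i0) by have := subgroupV sH H_i0; rewrite opx1 invK.
  have := subgroupM sH Hi0 Hi.
  by rewrite (Ai _ (Kf _ _ Kx Hi)) -(Ai _ (HK _ Hi0)) opKVg.
- right => x Gx; have [i Hi] := fC x Gx.
  have AT : [set j | `[< K (f j) >]] = [set: 'I_p].
    by apply/eqP; rewrite eqEcard subsetT cardsT card_ord Ap leqnn.
  have := in_setT i; rewrite -AT inE => /asboolP Kfi.
  by have := subgroupM sK Kfi (HK _ Hi); rewrite opKVg.
Qed.

Lemma has_index_eq (G H H' : T -> Prop) n :
  (forall x, H x <-> H' x) -> has_index op inv G H n -> has_index op inv G H' n.
Proof.
move=> HH' [f [fG fD fC]]; exists f; split => // [i j /HH' /fD // | x /fC [i /HH' Hi]].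
by exists i.
Qed.

Lemma second_isomorphism_index (I C : T -> Prop) p :
  is_subgroup op e inv I -> is_subgroup op e inv C ->
  (forall x, exists y c, [/\ I y, C c & x = op y c]) ->
  has_index op inv I (fun x => I x /\ C x) p -> has_index op inv (@setT_ T) C p.
Proof.
move=> sI sC IC_eq [f [fI fD fC]]; exists f; split => // [i j Cij | x _].
  by apply: fD; split; first exact: (subgroupM sI (subgroupV sI (fI i)) (fI j)).
have [y [c [Iy Cc ->]]] := IC_eq x; have [i [_ Cyi]] := fC y Iy.
by exists i; rewrite opA; exact: (subgroupM sC Cyi Cc).
Qed.

Lemma prime_index_maximal (H : T -> Prop) p :
  is_subgroup op e inv H -> (exists x, ~ H x) -> prime p ->
  has_index op inv (@setT_ T) H p -> maximal_subgroup op e inv H.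
Proof.
move=> sH notH p_pr H_idx; split => // K sK HK.
have sT : is_subgroup op e inv (@setT_ T) by [].
have [KH | TK] := prime_index_intermediate sT sH sK HK (fun _ _ => Logic.I) p_pr H_idx.
  by right.
by left => x; apply: TK.
Qed.

End Group.

Notation "a ⊕ b" := (badd a b) (at level 50, left associativity).
Notation "⊖ a" := (bopp a) (at level 35, right associativity).
Notation "a ⊗ b" := (bmul a b) (at level 40, left associativity).
Notation add_subgroup B := (is_subgroup (@badd B) (bzero B) (@bopp B)).
Notation mul_subgroup B := (is_subgroup (@bmul B) (bone B) (@binv B)).

Section BraceIdentities.
Variable B : brace.
Local Notation o := (bzero B).
Local Notation lam := (@lambda B).

Lemma badd_group : group_laws (@badd B) o (@bopp B).
Proof. by split; [exact: baddA | exact: badd0x | exact: baddx0 | exact: baddNx | exact: baddxN].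
Qed.

Lemma bmul_group : group_laws (@bmul B) (bone B) (@binv B).
Proof. by split; [exact: bmulA | exact: bmul1x | exact: bmulx1 | exact: bmulVx | exact: bmulxV].
Qed.

Local Notation addG := badd_group.

Lemma bmulx0 (a : B) : a ⊗ o = a.
Proof.
have := brace_compat a o o; rewrite badd0x => /(congr1 (badd (⊖ (a ⊗ o)))).
by rewrite baddNx -!baddA (opKg addG) => /(congr1 (badd a)); rewrite baddx0 (opKVg addG).
Qed.

Lemma bone_zero : bone B = o.
Proof. by rewrite -(bmulx0 (bone B)) bmul1x. Qed.

Lemma bmul_lambda (a b : B) : a ⊗ b = a ⊕ lam a b.
Proof. by rewrite /lambda (opKVg addG). Qed.

Lemma lambdaD (a b c : B) : lam a (b ⊕ c) = lam a b ⊕ lam a c.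
Proof. by rewrite /lambda brace_compat !baddA. Qed.

Lemma lambdax0 (a : B) : lam a o = o.
Proof. by rewrite /lambda bmulx0 baddNx. Qed.

Lemma lambdaN (a b : B) : lam a (⊖ b) = ⊖ lam a b.
Proof. by apply: (inv_uniq addG); rewrite -lambdaD baddxN lambdax0. Qed.

Lemma lambda0x (b : B) : lam o b = b.
Proof. by rewrite /lambda -bone_zero bmul1x bone_zero (inv1 addG) badd0x. Qed.

Lemma lambdaM (a b c : B) : lam (a ⊗ b) c = lam a (lam b c).
Proof.
have a_oppb : a ⊗ (⊖ b) = a ⊕ ⊖ (a ⊗ b) ⊕ a.
  have := brace_compat a b (⊖ b); rewrite baddxN bmulx0 => ab_eq.
  apply: (opgI addG (a := a ⊗ b ⊕ ⊖ a)); rewrite -ab_eq.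
  by rewrite !baddA (opgKV addG) baddxN badd0x.
rewrite /lambda brace_compat a_oppb.
by rewrite !baddA baddNx badd0x (opgK addG) bmulA.
Qed.

Lemma lambdaK (a b : B) : lam (binv a) (lam a b) = b.
Proof. by rewrite -lambdaM bmulVx bone_zero lambda0x. Qed.

Lemma lambdaKV (a b : B) : lam a (lam (binv a) b) = b.
Proof. by rewrite -lambdaM bmulxV bone_zero lambda0x. Qed.

Lemma lambda_invmul (a b : B) : lam a (binv a ⊗ b) = ⊖ a ⊕ b.
Proof. by rewrite /lambda bmulA bmulxV bmul1x. Qed.

Lemma binv_mul_lambda (a b : B) : binv a ⊗ b = lam (binv a) (⊖ a ⊕ b).
Proof. by rewrite -lambda_invmul lambdaK. Qed.

Lemma badd_lambda (a b : B) : a ⊕ b = a ⊗ lam (binv a) b.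
Proof. by rewrite bmul_lambda lambdaKV. Qed.

End BraceIdentities.

Section Substructures.
Variable B : brace.
Local Notation o := (bzero B).
Local Notation lam := (@lambda B).
Local Notation addG := (badd_group B).
Local Notation mulG := (bmul_group B).

Definition lambda_invariant (L : B -> Prop) := forall b x, L x -> L (lam b x).

Lemma lambda_invariant_mul_subgroup (L : B -> Prop) :
  add_subgroup B L -> lambda_invariant L -> mul_subgroup B L.
Proof.
move=> sL lamL; split.
- by rewrite bone_zero; apply: (subgroup1 sL).
- by move=> x y Lx Ly; rewrite bmul_lambda; exact: (subgroupM sL Lx (lamL x y Ly)).
- move=> x Lx; have lam_inv : lam x (binv x) = ⊖ x.
    by apply: (opgI addG (a := x)); rewrite -bmul_lambda bmulxV bone_zero baddxN.
  by rewrite -(lambdaK x (binv x)) lam_inv; apply/lamL/(subgroupV sL).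
Qed.

Lemma lambda_invariant_coset (L : B -> Prop) a b :
  lambda_invariant L -> L (binv a ⊗ b) <-> L (⊖ a ⊕ b).
Proof.
by move=> lamL; split => Lab; [rewrite -lambda_invmul | rewrite binv_mul_lambda]; apply: lamL.
Qed.

Section Ideal.
Variable L : B -> Prop.
Hypothesis iL : ideal L.

Lemma ideal_subbrace : subbrace L. Proof. by case: iL. Qed.
Lemma ideal_add_subgroup : add_subgroup B L. Proof. by case: iL => [[]]. Qed.
Lemma ideal_mul_subgroup : mul_subgroup B L. Proof. by case: iL => [[]]. Qed.
Lemma ideal_add_normal : is_normal (@badd B) (@bopp B) L. Proof. by case: iL. Qed.
Lemma ideal_mul_normal : is_normal (@bmul B) (@binv B) L. Proof. by case: iL. Qed.
Lemma ideal_lambda_invariant : lambda_invariant L. Proof. by case: iL. Qed.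

End Ideal.

Definition sum_brace (C L : B -> Prop) (x : B) := exists c, C c /\ L (⊖ c ⊕ x).

Lemma sum_subbrace (C L : B -> Prop) : subbrace C -> ideal L -> subbrace (sum_brace C L).
Proof.
move=> [aC mC] iL; have aL := ideal_add_subgroup iL; have mL := ideal_mul_subgroup iL.
have nL := ideal_add_normal iL; have nmL := ideal_mul_normal iL.
have coset := lambda_invariant_coset _ _ (ideal_lambda_invariant iL).
split; split.
- by exists o; split; [apply: (subgroup1 aC) | rewrite baddNx; apply: (subgroup1 aL)].
- move=> x y [c [Cc Lx]] [c' [Cc' Ly]]; exists (c ⊕ c').
  split; first exact: (subgroupM aC Cc Cc').
  have := subgroupM aL (nL (⊖ c') _ Lx) Ly.
  by rewrite (invK addG) !baddA (opgK addG) (invM addG) ?baddA.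
- move=> x [c [Cc Lx]]; exists (⊖ c); split; first exact: (subgroupV aC Cc).
  have := nL c _ (subgroupV aL Lx).
  by rewrite (invK addG) (invM addG) (invK addG) !baddA (opgK addG).
- exists o; split; first by rewrite -bone_zero; apply: (subgroup1 mC).
  by rewrite bone_zero baddNx; apply: (subgroup1 aL).
- move=> x y [c [Cc /coset Lx]] [c' [Cc' /coset Ly]]; exists (c ⊗ c').
  split; first exact: (subgroupM mC Cc Cc').
  apply/coset; have := subgroupM mL (nmL (binv c') _ Lx) Ly.
  by rewrite (invK mulG) !bmulA (opgK mulG) (invM mulG) ?bmulA.
- move=> x [c [Cc /coset Lx]]; exists (binv c); split; first exact: (subgroupV mC Cc).
  apply/coset; have := nmL c _ (subgroupV mL Lx).
  by rewrite (invK mulG) (invM mulG) (invK mulG) !bmulA (opgK mulG).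
Qed.

Lemma maximal_sum_ideal (C L : B -> Prop) :
  maximal_subbrace C -> ideal L ->
  (forall x, sum_brace C L x) \/ (forall x, L x -> C x).
Proof.
move=> [sC _ maxC] iL; have aL := ideal_add_subgroup iL; have [aC _] := sC.
have C_sum x : C x -> sum_brace C L x.
  by move=> Cx; exists x; split; rewrite ?baddNx //; apply: (subgroup1 aL).
case: (maxC _ (sum_subbrace sC iL) C_sum) => [all_sum | sumC]; [by left | right].
move=> x Lx; apply: sumC; exists o; split; first exact: (subgroup1 aC).
by rewrite (inv1 addG) badd0x.
Qed.

Lemma sum_ideal_factorisation (C L : B -> Prop) :
  ideal L -> (forall x, sum_brace C L x) ->
  (forall x, exists y c, [/\ L y, C c & x = y ⊕ c]) /\
  (forall x, exists y c, [/\ L y, C c & x = y ⊗ c]).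
Proof.
move=> iL all_sum; split => x; have [c [Cc Lx]] := all_sum x.
- exists (c ⊕ (⊖ c ⊕ x) ⊕ ⊖ c), c; split => //; first exact: ideal_add_normal.
  by rewrite (opgKV addG) (opKVg addG).
- move/(lambda_invariant_coset _ _ (ideal_lambda_invariant iL)): Lx => Lx.
  exists (c ⊗ (binv c ⊗ x) ⊗ binv c), c; split => //; first exact: ideal_mul_normal.
  by rewrite (opgKV mulG) (opKVg mulG).
Qed.

Lemma index_mul_of_add (I C : B -> Prop) p :
  subbrace I ->
  (forall a b, I a -> I b -> C (binv a ⊗ b) <-> C (⊖ a ⊕ b)) ->
  has_index (@badd B) (@bopp B) I (fun x => I x /\ C x) p ->
  has_index (@bmul B) (@binv B) I (fun x => I x /\ C x) p.
Proof.
move=> [aI mI] coset [f [fI fD fC]].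
exists f; split => // [i j [_ /coset Cij] | x Ix].
  by apply: fD; split; [exact: (subgroupM aI (subgroupV aI (fI i)) (fI j)) | exact: Cij].
have [i [_ Cix]] := fC x Ix; exists i.
by split; [exact: (subgroupM mI (subgroupV mI (fI i)) Ix) | apply/coset].
Qed.

End Substructures.

Section IntegerMultiples.
Variable B : brace.
Local Notation addG := (badd_group B).
Local Notation nm := (natmul (@badd B) (bzero B)).
Local Open Scope ring_scope.

Definition bzmul (g : B) (z : int) : B :=
  match z with Posz n => nm g n | Negz n => ⊖ nm g n.+1 end.

Lemma natmul_comm g n : g ⊕ nm g n = nm g n ⊕ g.
Proof. by elim: n => [|n IH] /=; [rewrite badd0x baddx0 | rewrite -baddA -IH]. Qed.

Lemma bzmul1 g : bzmul g 1 = g.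
Proof. exact: baddx0. Qed.

Lemma bzmulN g z : bzmul g (- z) = ⊖ bzmul g z.
Proof.
case: z => [[|n]|n]; first by rewrite oppr0 /= (inv1 addG).
  by rewrite -NegzE.
by rewrite NegzE opprK /= (invK addG).
Qed.

Lemma bzmulS g z : bzmul g (z + 1) = bzmul g z ⊕ g.
Proof.
case: z => [n|[|n]].
- by rewrite -PoszD addn1 /= natmul_comm.
- by rewrite /= baddx0 baddNx.
- have -> : Negz n.+1 + 1 = Negz n by rewrite !NegzE; lia.
  by rewrite /= [⊖ (g ⊕ (g ⊕ _))](invM addG) (opgKV addG).
Qed.

Lemma bzmulD g a b : bzmul g (a + b) = bzmul g a ⊕ bzmul g b.
Proof.
have bzmulDn (c : int) (n : nat) : bzmul g (c + n) = bzmul g c ⊕ bzmul g n.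
  elim: n => [|n IH]; first by rewrite addr0 baddx0.
  by rewrite -addn1 PoszD addrA !bzmulS IH baddA.
case: b => n; first exact: bzmulDn.
have := bzmulDn (a - n.+1%:Z) n.+1; rewrite subrK => ->.
by rewrite NegzE bzmulN (opgK addG).
Qed.

Lemma bzmul_mem (H : B -> Prop) g z : add_subgroup B H -> H g -> H (bzmul g z).
Proof.
move=> sH Hg; have Hn n : H (nm g n).
  by elim: n => [|n IH] /=; [apply: (subgroup1 sH) | apply: (subgroupM sH Hg IH)].
by case: z => n; [exact: Hn | exact: (subgroupV sH (Hn n.+1))].
Qed.

Lemma lambda_bzmul b g z : lambda b (bzmul g z) = bzmul (lambda b g) z.
Proof.
have lambda_natmul n : lambda b (nm g n) = nm (lambda b g) n.
  by elim: n => [|n IH] /=; [exact: lambdax0 | rewrite lambdaD IH].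
by case: z => n; rewrite /bzmul ?lambdaN lambda_natmul.
Qed.

End IntegerMultiples.

Section CongruenceModIdeal.
Variables (B : brace) (J : B -> Prop).
Hypothesis iJ : ideal J.
Local Notation lam := (@lambda B).
Local Notation addG := (badd_group B).
Let aJ := ideal_add_subgroup iJ.

Definition eqmod (x y : B) := J (⊖ x ⊕ y).

Lemma eqmod_refl x : eqmod x x.
Proof. by rewrite /eqmod baddNx; apply: (subgroup1 aJ). Qed.

Lemma eqmod_sym x y : eqmod x y -> eqmod y x.
Proof. by move=> /(subgroupV aJ); rewrite (invM addG) (invK addG). Qed.

Lemma eqmod_trans x y z : eqmod x y -> eqmod y z -> eqmod x z.
Proof. by move=> xy /(subgroupM aJ xy); rewrite -baddA (opKVg addG). Qed.

Lemma eqmodDl z x y : eqmod x y -> eqmod (z ⊕ x) (z ⊕ y).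
Proof. by rewrite /eqmod (invM addG) -baddA (opKg addG). Qed.

Lemma eqmodDr z x y : eqmod x y -> eqmod (x ⊕ z) (y ⊕ z).
Proof.
by move=> /(ideal_add_normal iJ (⊖ z)); rewrite /eqmod (invM addG) (invK addG) !baddA.
Qed.

Lemma eqmodD x x' y y' : eqmod x x' -> eqmod y y' -> eqmod (x ⊕ y) (x' ⊕ y').
Proof. by move=> xx' yy'; apply: (eqmod_trans (eqmodDr _ xx') (eqmodDl _ yy')). Qed.

Lemma eqmodN x y : eqmod x y -> eqmod (⊖ x) (⊖ y).
Proof.
move=> /eqmod_sym /(ideal_add_normal iJ x).
by rewrite /eqmod (invK addG) !baddA (opgK addG).
Qed.

Lemma eqmod_lambda b x y : eqmod x y -> eqmod (lam b x) (lam b y).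
Proof. by move=> xy; rewrite /eqmod -lambdaN -lambdaD; apply: ideal_lambda_invariant. Qed.

Lemma eqmod_mem (H : B -> Prop) x y :
  add_subgroup B H -> (forall u, J u -> H u) -> H x -> eqmod x y -> H y.
Proof. by move=> sH JH Hx /JH Hxy; rewrite -(opKVg addG x y); apply: (subgroupM sH Hx Hxy). Qed.

Lemma eqmod_mul x y : eqmod x y -> exists2 j, J j & y = x ⊗ j.
Proof.
move=> xy; exists (lam (binv x) (⊖ x ⊕ y)); first exact: ideal_lambda_invariant.
by rewrite -badd_lambda (opKVg addG).
Qed.

Lemma eqmod_bzmul g h w n : eqmod (bzmul g w) h -> eqmod (bzmul g (n * w)%R) (bzmul h n).
Proof.
move=> gw_h; have eqmod_natmul (k : nat) : eqmod (bzmul g (k%:Z * w)%R) (bzmul h k).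
  elim: k => [|k IH]; first by rewrite mul0r; apply: eqmod_refl.
  by rewrite -addn1 PoszD mulrDl mul1r !bzmulD bzmul1; apply: eqmodD.
case: n => k; first exact: eqmod_natmul.
by rewrite NegzE mulNr !bzmulN; apply/eqmodN/eqmod_natmul.
Qed.

End CongruenceModIdeal.


Lemma int_subgroup_dvdz (S : int -> Prop) :
  S 0%R -> (forall a b, S a -> S b -> S (a + b)%R) -> (forall a, S a -> S (- a)%R) ->
  exists m : nat, forall z, S z <-> (m %| z)%Z.
Proof.
move=> S0 SD SN.
have SMn (n : nat) z : S z -> S (n%:Z * z)%R.
  move=> Sz; elim: n => [|n IH]; first by rewrite mul0r.
  by rewrite -addn1 PoszD mulrDl mul1r; apply: SD.
have SM k z : S z -> S (k * z)%R.
  by case: k => n Sz; [exact: SMn | rewrite NegzE mulNr; apply/SN/SMn].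
have [[n [n_gt0 Sn]] | no_pos] := EM (exists n : nat, (0 < n)%N /\ S n).
- have ex_pos : exists n, `[< (0 < n)%N /\ S n >] by exists n; apply/asboolP.
  case: (ex_minnP ex_pos) => m /asboolP [m_gt0 Sm] m_min.
  exists m => z; split => [Sz | /dvdzP [k ->]]; last exact: SM.
  have Srem : S (z %% m)%Z.
    have -> : (z %% m)%Z = (z + - ((z %/ m)%Z * m))%R.
      by rewrite {2}(divz_eq z m) addrAC subrr add0r.
    by apply/SD/SN/SM.
  apply/dvdz_mod0P/eqP/contraT => rem_neq0.
  have rem_ge0 : (0 <= (z %% m)%Z)%R by apply: modz_ge0; lia.
  have rem_lt : ((z %% m)%Z < m)%R by apply: ltz_pmod; lia.
  have : (m <= `|(z %% m)%Z|)%N.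
    by apply/m_min/asboolP; split; [lia | rewrite gez0_abs].
  lia.
- exists 0%N => z; split => [Sz | /dvdzP [q ->]]; last by rewrite mulr0.
  have -> : z = 0%R; last exact: dvdz0.
  apply: (contra_notP _ no_pos) => z_neq0; exists `|z|%N; split; first lia.
  by case: (ger0P z) => [z_ge0 | z_lt0]; [rewrite gez0_abs | rewrite ltz0_abs //; apply: SN].
Qed.

Definition prime_layer_index (B : brace) (C I : B -> Prop) p :=
  [/\ prime p, has_index (@badd B) (@bopp B) I (fun x => I x /\ C x) p &
      forall a b, I a -> I b -> C (binv a ⊗ b) <-> C (⊖ a ⊕ b)].

Section CyclicSocleLayer.
Variables (B : brace) (C J I : B -> Prop) (g : B).
Hypotheses (C_max : maximal_subbrace C) (iJ : ideal J) (iI : ideal I).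
Hypotheses (JI : forall x, J x -> I x) (JC : forall x, J x -> C x).
Hypotheses (Ig : I g) (I_gen : forall x, I x -> exists z, eqmod J (bzmul g z) x).
Hypothesis I_socle : quot_in_socle I J.
Local Notation lam := (@lambda B).
Local Notation addG := (badd_group B).
Local Open Scope ring_scope.

Let aC : add_subgroup B C. Proof. by case: C_max => [[]]. Qed.
Let aI := ideal_add_subgroup iI.

Let socle_lambda x b : I x -> eqmod J b (lam x b).
Proof. by move=> /I_socle [lam_x _]; apply: lam_x. Qed.

Let socle_central x y : I x -> eqmod J (y ⊕ x) (x ⊕ y).
Proof. by move=> /I_socle [_ central_x]; apply: central_x. Qed.

Lemma socle_layer_coset a b : I a -> I b -> C (binv a ⊗ b) <-> C (⊖ a ⊕ b).
Proof.
move=> Ia Ib; have := socle_lambda (⊖ a ⊕ b) (subgroupV (ideal_mul_subgroup iI) Ia).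
rewrite -binv_mul_lambda => ab_eq.
split => Cab; first exact: (eqmod_mem aC JC Cab (eqmod_sym iJ ab_eq)).
exact: (eqmod_mem aC JC Cab ab_eq).
Qed.

(* The ideal J + <a g>. *)
Definition multiple_ideal (a : nat) (x : B) := exists z : int, eqmod J (bzmul g (a%:Z * z)) x.

Lemma multiple_ideal_sub a x : multiple_ideal a x -> I x.
Proof. by case=> z; apply: (eqmod_mem aI JI (bzmul_mem _ aI Ig)). Qed.

Lemma multiple_ideal_add_subgroup a : add_subgroup B (multiple_ideal a).
Proof.
split.
- by exists 0; rewrite mulr0; apply: (eqmod_refl iJ).
- move=> x y [zx gx] [zy gy]; exists (zx + zy).
  by rewrite mulrDr bzmulD; apply: (eqmodD iJ).
- by move=> x [z gx]; exists (- z); rewrite mulrN bzmulN; apply: (eqmodN iJ).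
Qed.

Lemma multiple_ideal_lambda_invariant a : lambda_invariant (multiple_ideal a).
Proof.
move=> b x [z gx]; have [w gw] := I_gen (ideal_lambda_invariant iI b Ig).
exists (z * w); apply: (eqmod_trans iJ _ (eqmod_lambda iJ b gx)).
by rewrite lambda_bzmul mulrA; apply: (eqmod_bzmul iJ).
Qed.

Lemma multiple_ideal_ideal a : ideal (multiple_ideal a).
Proof.
have aL := @multiple_ideal_add_subgroup a.
have lamL := @multiple_ideal_lambda_invariant a.
have mL := lambda_invariant_mul_subgroup aL lamL.
have JL x : J x -> multiple_ideal a x.
  by move=> Jx; exists 0; rewrite mulr0 /eqmod /= (inv1 addG) badd0x.
split; [by split | move=> b x Lx | move=> b x Lx | exact: lamL].
- have Ix := multiple_ideal_sub Lx; case: Lx => z gx; exists z.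
  apply: (eqmod_trans iJ gx _).
  by have := eqmodDr iJ (⊖ b) (eqmod_sym iJ (socle_central b Ix)); rewrite (opgK addG).
- have Lbx := lamL b x Lx; have Ibx := multiple_ideal_sub Lbx.
  have bx_eq : eqmod J (lam b x ⊗ b) (b ⊗ x).
    rewrite !bmul_lambda; apply: (eqmod_sym iJ).
    exact: (eqmod_trans iJ (socle_central b Ibx) (eqmodDl _ (socle_lambda b Ibx))).
  have [j Jj ->] := eqmod_mul iJ bx_eq.
  rewrite -!bmulA; apply: (subgroupM mL Lbx); rewrite !bmulA.
  exact/JL/(ideal_mul_normal iJ).
Qed.

Section LayerIndex.
Variable m : nat.
Hypothesis C_bzmul : forall z, C (bzmul g z) <-> (m %| z)%Z.

Lemma cyclic_layer_index_neq1 : (exists y, I y /\ ~ C y) -> m <> 1%N.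
Proof.
move=> [y [Iy notCy]] m1; have [z gy] := I_gen Iy.
by apply/notCy/(eqmod_mem aC JC _ gy)/C_bzmul; rewrite m1 dvd1z.
Qed.

Lemma cyclic_layer_index_prime : (exists y, I y /\ ~ C y) -> prime m.
Proof.
move=> /cyclic_layer_index_neq1 m_neq1.
case: (boolP (prime m)) => // /negP m_nprime; exfalso.
have [a [a_gt1 a_dvd a_neqm]] : exists a, [/\ (1 < a)%N, (a %| m)%N & a <> m].
  case: (posnP m) => [-> | m_gt0]; first by exists 2%N.
  have m_gt1 : (1 < m)%N by lia.
  exists (pdiv m); split; [exact: (prime_gt1 (pdiv_prime m_gt1)) | exact: pdiv_dvd |].
  by move=> pdiv_m; apply: m_nprime; rewrite -pdiv_m; apply: pdiv_prime.
have [all_sum | LaC] := maximal_sum_ideal C_max (@multiple_ideal_ideal a).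
- have [c [Cc [z gz]]] := all_sum g.
  have : C (bzmul g (1 - a%:Z * z)).
    apply: (eqmod_mem aC JC Cc _).
    have := eqmodDl g (eqmodN iJ (eqmod_sym iJ gz)).
    rewrite (invM addG) (invK addG) (opKVg addG) => c_eq.
    by rewrite bzmulD bzmulN bzmul1.
  move=> /C_bzmul /(dvdz_trans (a_dvd : (a%:Z %| m%:Z)%Z)) a_dvd_1az.
  have : (a %| 1 - a%:Z * z + a%:Z * z)%Z by apply: rpredD => //; apply: dvdz_mulr.
  by rewrite subrK dvdz1; lia.
- have /C_bzmul m_dvd_a : C (bzmul g a).
    by apply: LaC; exists 1; rewrite mulr1; apply: (eqmod_refl iJ).
  by apply: a_neqm; apply/eqP; rewrite eqn_dvd a_dvd; exact: m_dvd_a.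
Qed.

Lemma cyclic_layer_transversal : (0 < m)%N ->
  has_index (@badd B) (@bopp B) I (fun x => I x /\ C x) m.
Proof.
move=> m_gt0; exists (fun i : 'I_m => bzmul g i); split.
- by move=> i; apply: (bzmul_mem _ aI Ig).
- move=> i j [_]; rewrite -bzmulN -bzmulD addrC => /C_bzmul.
  have := ltn_ord i; have := ltn_ord j => j_lt i_lt.
  by rewrite -eqz_mod_dvd !modz_small ?ltz_nat ?i_lt ?j_lt // => /eqP [/val_inj ->].
- move=> x Ix; have [z gx] := I_gen Ix.
  have rem_ge0 : 0 <= (z %% m)%Z by apply: modz_ge0; lia.
  have rem_lt : (`|(z %% m)%Z| < m)%N by have := ltz_pmod z (d := m); lia.
  exists (Ordinal rem_lt); split.
    exact: (subgroupM aI (subgroupV aI (bzmul_mem _ aI Ig)) Ix).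
  apply: (eqmod_mem aC JC _ (eqmodDl _ gx)).
  change (C (⊖ bzmul g `|(z %% m)%Z|%N ⊕ bzmul g z)).
  rewrite gez0_abs // -bzmulN -bzmulD; apply/C_bzmul.
  by rewrite addrC -eqz_mod_dvd modz_mod.
Qed.

End LayerIndex.

Lemma cyclic_socle_layer_index : (exists y, I y /\ ~ C y) -> exists p, prime_layer_index C I p.
Proof.
move=> I_notC; have [m C_bzmul] := int_subgroup_dvdz (S := fun z => C (bzmul g z))
  (subgroup1 aC) (fun a b Ca Cb => eq_ind_r C (subgroupM aC Ca Cb) (bzmulD g a b))
  (fun a Ca => eq_ind_r C (subgroupV aC Ca) (bzmulN g a)).
have m_prime := cyclic_layer_index_prime C_bzmul I_notC.
exists m; split => //; first exact: (cyclic_layer_transversal C_bzmul (prime_gt0 m_prime)).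
exact: socle_layer_coset.
Qed.

End CyclicSocleLayer.

Lemma quot_inf_cyclic_generator (B : brace) (I J : B -> Prop) : quot_inf_cyclic I J ->
  exists2 g, I g & forall x, I x -> exists z, eqmod J (bzmul g z) x.
Proof.
move=> [g [Ig [I_gen _]]]; exists g => // x /I_gen [n [Jx | Jx]]; first by exists n.
by exists (- n%:Z)%R; rewrite /eqmod bzmulN.
Qed.

Lemma prime_order_layer_index (B : brace) (C J I : B -> Prop) :
  subbrace C -> ideal J -> ideal I -> (forall x, J x -> I x) -> (forall x, J x -> C x) ->
  (exists y, I y /\ ~ C y) -> quot_prime_order I J -> exists p, prime_layer_index C I p.
Proof.
move=> [aC _] iJ iI JI JC [y [Iy notCy]] [p [p_prime idx]].
have aI := ideal_add_subgroup iI.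
have aIC : add_subgroup B (fun x => I x /\ C x).
  split; first by split; [apply: (subgroup1 aI) | apply: (subgroup1 aC)].
    move=> a b [Ia Ca] [Ib Cb].
    by split; [exact: (subgroupM aI Ia Ib) | exact: (subgroupM aC Ca Cb)].
  by move=> a [Ia Ca]; split; [exact: (subgroupV aI Ia) | exact: (subgroupV aC Ca)].
have [ICJ | IIC] := prime_index_intermediate (badd_group B) aI (ideal_add_subgroup iJ) aIC
  (fun x Jx => conj (JI x Jx) (JC x Jx)) (fun x => @proj1 _ _) p_prime idx; last first.
  by have [] := IIC y Iy.
have J_IC x : J x <-> I x /\ C x by split => [Jx | /ICJ //]; split; [apply: JI | apply: JC].
exists p; split => // [| a b Ia Ib].
  exact: (has_index_eq J_IC idx).
have coset := lambda_invariant_coset a b (ideal_lambda_invariant iJ).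
have mI := ideal_mul_subgroup iI.
split => Cab; apply/JC/coset/ICJ; split => //.
  exact: (subgroupM mI (subgroupV mI Ia) Ib).
exact: (subgroupM aI (subgroupV aI Ia) Ib).
Qed.

Lemma exists_chain_exit (P : nat -> Prop) n :
  P 0 -> ~ P n -> exists2 k, k < n & P k /\ ~ P k.+1.
Proof.
move=> P0; elim: n => [// | n IH] notPn1.
have [Pn | notPn] := EM (P n); first by exists n.
by have [k k_lt Pk] := IH notPn; exists k => //; apply: ltnW.
Qed.

Theorem theorem3p19 (B : brace) (C : B -> Prop) :
  supersoluble B -> maximal_subbrace C ->
  exists p : nat,
    [/\ prime p,
        has_index (@badd B) (@bopp B) (@setT_ B) C p,
        has_index (@bmul B) (@binv B) (@setT_ B) C p,
        maximal_subgroup (@badd B) (bzero B) (@bopp B) C &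
        maximal_subgroup (@bmul B) (bone B) (@binv B) C].
Proof.
move=> [n [I [I0 In I_ideal I_mono I_step]]] C_max.
have [[aC mC] C_proper _] := C_max.
have [k k_lt [IkC Ik1C]] : exists2 k, k < n &
    (forall x, I k x -> C x) /\ ~ (forall x, I k.+1 x -> C x).
  apply: exists_chain_exit => [x /I0 -> | IC]; first exact: (subgroup1 aC).
  by have [x] := C_proper; apply; apply/IC/In.
have I_notC : exists y, I k.+1 y /\ ~ C y.
  by apply: contra_notP Ik1C => no_y x Ix; apply: contra_notP no_y => notCx; exists x.
have iJ := I_ideal k (ltnW k_lt); have iI := I_ideal k.+1 k_lt.
have [p [p_prime idx_add coset]] : exists p, prime_layer_index C (I k.+1) p.
  case: (I_step k k_lt) => [[/quot_inf_cyclic_generator [g Ig I_gen] socle] | prime_order].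
    exact: (cyclic_socle_layer_index C_max iJ iI (I_mono k k_lt) IkC Ig I_gen socle I_notC).
  exact: (prime_order_layer_index (conj aC mC) iJ iI (I_mono k k_lt) IkC I_notC prime_order).
have [all_sum | IC] := maximal_sum_ideal C_max iI; last first.
  by have [y [/IC]] := I_notC.
have [decA decM] := sum_ideal_factorisation iI all_sum.
have [aI mI] := ideal_subbrace iI.
have idx_mul := index_mul_of_add (conj aI mI) coset idx_add.
have idxA := second_isomorphism_index (badd_group B) aI aC decA idx_add.
have idxM := second_isomorphism_index (bmul_group B) mI mC decM idx_mul.
exists p; split => //.
  exact: (prime_index_maximal (badd_group B) aC C_proper p_prime idxA).
exact: (prime_index_maximal (bmul_group B) mC C_proper p_prime idxM).
Qed.
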